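(* Let $G_0,G_1\in\mathbb{Z}$, let $(G_n)_{n\ge0}$ satisfy $G_n=G_{n-1}+G_{n-2}$ for $n\ge2$, and let $\mu = G_1^2 - G_0 G_1 - G_0^2$. For every odd integer $k \geq 1$, $\mathcal{G}^2_{G_0,G_1}(k)$ divides $|2\mu|$.
   Context: $\mathcal{G}^2_{G_0,G_1}(k)=\gcd\{\sum_{i=1}^k G_{n+i}^2 : n\ge 0\}$ (nonnegative gcd of this infinite set of integers). *)

From Stdlib Require Import ZArith.
Open Scope Z_scope.

Definition is_gcd_of_set (S : Z -> Prop) (g : Z) : Prop :=
  0 <= g /\ (forall x, S x -> (g | x)) /\
  (forall d, (forall x, S x -> (d | x)) -> (d | g)).

Fixpoint sq_window (G : nat -> Z) (n k : nat) : Z :=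
  match k with
  | O => 0
  | S k' => sq_window G n k' + G (n + S k')%nat ^ 2
  end.

Definition sq_window_set (G : nat -> Z) (k : nat) : Z -> Prop :=
  fun x => exists n : nat, x = sq_window G n k.

(* Writing S_n for the window sum, S_{n+2} - 3 S_{n+1} + S_n = sum_{i=1}^k D_{n+i} with
   D_m = G_{m+2}^2 - 3 G_{m+1}^2 + G_m^2.  The recurrence gives D_m = -2 mu_m, where
   mu_m = G_{m+1}^2 - G_m G_{m+1} - G_m^2 changes sign at each step (Cassini).  Hence
   consecutive D's cancel, and for odd k the combination S_2 - 3 S_1 + S_0 equals
   D_1 = 2 mu, which every common divisor of the window sums must divide. *)
From Stdlib Require Import ZArith Lia.
Open Scope Z_scope.

Definition window_diff2 (G : nat -> Z) (n k : nat) : Z :=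
  sq_window G (n + 2) k - 3 * sq_window G (n + 1) k + sq_window G n k.

Definition sq_diff2 (G : nat -> Z) (m : nat) : Z :=
  G (m + 2)%nat ^ 2 - 3 * G (m + 1)%nat ^ 2 + G m ^ 2.

Definition cassini_form (G : nat -> Z) (m : nat) : Z :=
  G (m + 1)%nat ^ 2 - G m * G (m + 1)%nat - G m ^ 2.

Lemma window_diff2_succ (G : nat -> Z) (n k : nat) :
  window_diff2 G n (S k) = window_diff2 G n k + sq_diff2 G (n + S k).
Proof.
  unfold window_diff2, sq_diff2; cbn [sq_window].
  replace (n + 2 + S k)%nat with (n + S k + 2)%nat by lia.
  replace (n + 1 + S k)%nat with (n + S k + 1)%nat by lia.
  ring.
Qed.

Lemma divide_window_diff2 (G : nat -> Z) (k : nat) (d : Z) :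
  (forall x, sq_window_set G k x -> (d | x)) -> forall n, (d | window_diff2 G n k).
Proof.
  intros hd n; unfold window_diff2.
  apply Z.divide_add_r; [apply Z.divide_sub_r; [| apply Z.divide_mul_r] |];
    apply hd; eexists; reflexivity.
Qed.

Section FibonacciRecurrence.

Variable G : nat -> Z.
Hypothesis hrec : forall n : nat, (2 <= n)%nat -> G n = G (n - 1)%nat + G (n - 2)%nat.

Lemma fib_add2 (m : nat) : G (m + 2)%nat = G (m + 1)%nat + G m.
Proof.
  rewrite (hrec (m + 2)) by lia.
  replace (m + 2 - 1)%nat with (m + 1)%nat by lia.
  now replace (m + 2 - 2)%nat with m by lia.
Qed.

Lemma cassini_form_succ (m : nat) : cassini_form G (S m) = - cassini_form G m.
Proof.
  unfold cassini_form.
  replace (S m + 1)%nat with (m + 2)%nat by lia.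
  replace (S m) with (m + 1)%nat by lia.
  rewrite fib_add2; ring.
Qed.

Lemma sq_diff2_cassini (m : nat) : sq_diff2 G m = -2 * cassini_form G m.
Proof. unfold sq_diff2, cassini_form; rewrite fib_add2; ring. Qed.

Lemma sq_diff2_pair (m : nat) : sq_diff2 G m + sq_diff2 G (S m) = 0.
Proof. rewrite !sq_diff2_cassini, cassini_form_succ; ring. Qed.

Lemma window_diff2_odd (n j : nat) : window_diff2 G n (2 * j + 1) = sq_diff2 G (S n).
Proof.
  induction j as [|j IH].
  - change (2 * 0 + 1)%nat with (S 0).
    rewrite window_diff2_succ; unfold window_diff2; cbn [sq_window].
    replace (n + 1)%nat with (S n) by lia; ring.
  - replace (2 * S j + 1)%nat with (S (S (2 * j + 1))) by lia.
    rewrite !window_diff2_succ, IH.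
    replace (n + S (S (2 * j + 1)))%nat with (S (n + S (2 * j + 1))) by lia.
    rewrite <- Z.add_assoc, sq_diff2_pair; ring.
Qed.

End FibonacciRecurrence.

Theorem theorem4p8 (G : nat -> Z)
  (hrec : forall n : nat, (2 <= n)%nat -> G n = G (n - 1)%nat + G (n - 2)%nat)
  (k : nat) (hk1 : (1 <= k)%nat) (hkodd : Nat.odd k = true)
  (g : Z) (hg : is_gcd_of_set (sq_window_set G k) g) :
  (g | Z.abs (2 * (G 1%nat ^ 2 - G 0%nat * G 1%nat - G 0%nat ^ 2))).
Proof.
  destruct hg as [_ [hdiv _]].
  destruct (proj1 (Nat.odd_spec k) hkodd) as [j ->].
  apply Z.divide_abs_r.
  replace (2 * _) with (window_diff2 G 0 (2 * j + 1)).
  - now apply divide_window_diff2.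
  - rewrite window_diff2_odd, sq_diff2_cassini, cassini_form_succ by exact hrec.
    unfold cassini_form; simpl Nat.add; ring.
Qed.
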